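(* Let $(\mathfrak{h},[\;,\;],\langle\;,\;\rangle_{\mathfrak{h}})$ be an Einstein Lorentzian nilpotent Lie algebra whose center $\mathrm{Z}(\mathfrak{h})$ is nondegenerate and Euclidean (positive definite), and let $\mathfrak{g}$, $[\;,\;]_{\mathfrak{g}}$, $\langle\;,\;\rangle_{\mathfrak{g}}$, $\omega$ be as in the context. If for all $u,v,w\in\mathfrak{g}$ one has $\omega(\mathrm{ad}_u^*v,w)+\omega(v,\mathrm{ad}_u^*w)=0$, then $(\mathfrak{g},[\;,\;]_{\mathfrak{g}},\langle\;,\;\rangle_{\mathfrak{g}})$ is a Ricci-soliton.
   Context: Setting: $\mathfrak{h}$ real finite-dimensional nilpotent Lie algebra with Lorentzian inner product, center $\mathrm{Z}(\mathfrak{h})$ nondegenerate with positive definite restriction $\langle\;,\;\rangle_z$. $\mathfrak{g}=\mathrm{Z}(\mathfrak{h})^\perp$ with restricted inner product $\langle\;,\;\rangle_{\mathfrak{g}}$; for $u,v\in\mathfrak{g}$, $[u,v]=[u,v]_{\mathfrak{g}}+\omega(u,v)$ with $[u,v]_{\mathfrak{g}}\in\mathfrak{g}$, $\omega(u,v)\in\mathrm{Z}(\mathfrak{h})$, and $(\mathfrak{g},[\;,\;]_{\mathfrak{g}})$ is a Lie algebra. $\mathrm{ad}_u(v)=[u,v]_{\mathfrak{g}}$ and $\mathrm{ad}_u^*$ is its adjoint w.r.t. $\langle\;,\;\rangle_{\mathfrak{g}}$. Ricci curvature is defined via the Levi-Civita product $2\langle \mathrm{L}_uv,w\rangle=\langle[u,v],w\rangle+\langle[w,u],v\rangle+\langle[w,v],u\rangle$,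 $K(u,v)=\mathrm{L}_{[u,v]}-[\mathrm{L}_u,\mathrm{L}_v]$, $\mathrm{ric}(u,v)=\mathrm{tr}(w\mapsto K(u,w)v)$, $\langle\mathrm{Ric}\,u,v\rangle=\mathrm{ric}(u,v)$; Einstein means $\mathrm{Ric}=\lambda\,\mathrm{Id}$ for some $\lambda\in\mathbb{R}$. A pseudo-Euclidean Lie algebra is a Ricci-soliton if there exist $\lambda\in\mathbb{R}$ and a derivation $D$ of it with $\mathrm{Ric}=\lambda\,\mathrm{Id}+D$. *)

From HB Require Import structures.
From mathcomp Require Import all_boot all_order all_algebra.
From mathcomp Require Import reals.
From Stdlib Require Import ClassicalEpsilon.
Set Implicit Arguments. Unset Strict Implicit. Unset Printing Implicit Defensive.
Import Order.TTheory GRing.Theory Num.Theory.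
Local Open Scope ring_scope.

Section MetricLie.
Variables (R : realType) (V : vectType R).

(* classical choice of a vector satisfying P (used for vectors defined by
   a characterizing identity, unique when the form is nondegenerate) *)
Definition choose_vec (P : V -> Prop) : V := epsilon (inhabits (0 : V)) P.

Definition lie_algebra (br : V -> V -> V) : Prop :=
  [/\ (forall a x y z, br (a *: x + y) z = a *: br x z + br y z),
      (forall a x y z, br z (a *: x + y) = a *: br z x + br z y),
      (forall x, br x x = 0) &
      (forall x y z, br x (br y z) + br y (br z x) + br z (br x y) = 0)].

(* nilpotent: all brackets [x_k,[...,[x_1,x_0]]] of length k+1 vanish for some k *)
Definition nilpotent (br : V -> V -> V) : Prop :=
  exists k : nat, forall (x0 : V) (xs : seq V),
    size xs = k -> foldr (fun y acc => br y acc) x0 xs = 0.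

Definition sym_bilinear (b : V -> V -> R) : Prop :=
  (forall a x y z, b (a *: x + y) z = a * b x z + b y z) /\
  (forall x y, b x y = b y x).

Definition lorentzian (b : V -> V -> R) : Prop :=
  sym_bilinear b /\
  exists X : (\dim {:V}).-tuple V, basis_of fullv X /\
    exists i0 : 'I_(\dim {:V}), forall i j,
      b (tnth X i) (tnth X j) = if i == j then (if i == i0 then -1 else 1) else 0.

Definition central (br : V -> V -> V) (z : V) : Prop := forall x, br z x = 0.

Definition lc_prod (br : V -> V -> V) (b : V -> V -> R) (u v : V) : V :=
  choose_vec (fun x => forall w,
    2 * b x w = b (br u v) w + b (br w u) v + b (br w v) u).

Definition curv br b (u v w : V) : V :=
  lc_prod br b (br u v) w
  - (lc_prod br b u (lc_prod br b v w) - lc_prod br b v (lc_prod br b u w)).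

Definition vtrace (f : V -> V) : R :=
  \sum_(i < \dim {:V}) coord (vbasis fullv) i (f (tnth (vbasis fullv) i)).

Definition ric br b (u v : V) : R := vtrace (fun w => curv br b u w v).

Definition Ric br b (u : V) : V :=
  choose_vec (fun x => forall v, b x v = ric br b u v).

Definition einstein br b : Prop := exists lam : R, forall u, Ric br b u = lam *: u.

Definition derivation (br : V -> V -> V) (D : 'End(V)) : Prop :=
  forall u v, D (br u v) = br (D u) v + br u (D v).

Definition ricci_soliton br b : Prop :=
  exists (lam : R) (D : 'End(V)), derivation br D /\
    forall u, Ric br b u = lam *: u + D u.

Definition adj (b : V -> V -> R) (f : V -> V) (v : V) : V :=
  choose_vec (fun x => forall w, b x w = b v (f w)).

End MetricLie.

Section Decomp.
Variables (R : realType) (H : vectType R) (Z G : {vspace H}) (br : H -> H -> H).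

(* [u,v] = [u,v]_g + omega(u,v), with [u,v]_g in g = G, omega(u,v) in Z *)
Definition gbr (u v : subvs_of G) : subvs_of G :=
  vsproj G (daddv_pi G Z (br (vsval u) (vsval v))).

Definition omega (u v : H) : H := daddv_pi Z G (br u v).

Definition gform (b : H -> H -> R) (u v : subvs_of G) : R := b (vsval u) (vsval v).

End Decomp.

Arguments gbr {R H} Z G br u v.
Arguments omega {R H} Z G br u v.
Arguments gform {R H} G b u v.

From HB Require Import structures.
From mathcomp Require Import all_boot all_order all_algebra.
From mathcomp Require Import reals.
From mathcomp Require Import ring.
From Stdlib Require Import ClassicalEpsilon.
Set Implicit Arguments. Unset Strict Implicit. Unset Printing Implicit Defensive.
Import Order.TTheory GRing.Theory Num.Theory.
Local Open Scope ring_scope.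

(* Write h = g + Z with Z central and orthogonal to g, and let j(z) : g -> g be
   given by <j(z) u, w> = <omega(u, w), z>.  Splitting the Levi-Civita product
   of h along g and Z and tracing the curvature over dual frames of g and of Z
   gives, for u, v in g,
     ric_h(u, v) = ric_g(u, v) - 1/2 sum_i <omega(u, e_i), omega(v, e^i)>
                 = ric_g(u, v) + 1/2 <S u, v>,    S = sum_k j(z_k) j(z^k),
   so an Einstein constant lam for h yields Ric_g = lam Id - S/2.  The Jacobi
   identity gives j(z)[u, v]_g = ad_v^* j(z) u - ad_u^* j(z) v, and the
   hypothesis on omega says exactly j(z) ad_u^* = - ad_u j(z); together they
   make S, hence -S/2, a derivation of g. *)

Lemma choose_vecP (R : realType) (V : vectType R) (P : V -> Prop) :
  (exists x, P x) -> P (choose_vec P).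
Proof. exact: epsilon_spec. Qed.

Lemma sym_bilinear_for (R : realType) (V : vectType R) (b : V -> V -> R) :
  sym_bilinear b -> bilinear_for *%R *%R b.
Proof. by case=> bl bC; split=> z a x y /=; rewrite ?(bC z) bl. Qed.

Section LieAlgebra.
Variables (R : realType) (V : vectType R) (br : V -> V -> V).
Hypothesis br_lie : lie_algebra br.

Lemma lie_bilinear : bilinear_for *:%R *:%R br.
Proof. by case: br_lie => brl brr _ _; split=> z a x y; rewrite ?brl ?brr. Qed.

#[local] HB.instance Definition _ :=
  bilinear_isBilinear.Build R V V V *:%R *:%R br lie_bilinear.

Lemma lie_anticomm x y : br x y = - br y x.
Proof.
case: br_lie => _ _ br_alt _; apply/eqP; rewrite -addr_eq0.
by have := br_alt (x + y); rewrite linearDl !linearDr /= !br_alt add0r addr0 => ->.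
Qed.

Lemma lie_ad_derivation u v w : br u (br v w) = br (br u v) w + br v (br u w).
Proof.
case: br_lie => _ _ _ jacobi; apply/eqP; rewrite -subr_eq0 -(jacobi u v w).
by rewrite (lie_anticomm w u) (lie_anticomm w (br u v)) linearNr opprD addrA addrAC.
Qed.

End LieAlgebra.

Section DualFrame.
Variables (R : realType) (V : vectType R) (b : V -> V -> R).
Hypothesis b_sym : sym_bilinear b.

#[local] HB.instance Definition _ :=
  bilinear_isBilinear.Build R V V R *%R *%R b (sym_bilinear_for b_sym).

Let bC : forall x y, b x y = b y x := b_sym.2.

(* Every y in U expands as sum_i <y, Y i> X i; an orthonormal basis X with
   Y i = <X i, X i> X i is an example.  Frames stand in for nondegeneracy. *)
Definition dual_frame (U : {vspace V}) (I : finType) (X Y : I -> V) :=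
  [/\ forall i, X i \in U, forall i, Y i \in U &
      forall y, y \in U -> y = \sum_i b y (Y i) *: X i].

Section Frame.
Variables (U : {vspace V}) (I : finType) (X Y : I -> V).
Hypothesis fr : dual_frame U X Y.

Lemma frame_ext x y : x \in U -> y \in U ->
  {in U, forall w, b x w = b y w} -> x = y.
Proof.
case: fr => _ YU expand xU yU bxy; rewrite (expand x xU) (expand y yU).
by apply: eq_bigr => i _; rewrite bxy.
Qed.

Lemma frame_expand_dual y : y \in U -> y = \sum_i b y (X i) *: Y i.
Proof.
case: fr => XU YU expand yU; apply: frame_ext => //.
  by apply: memv_suml => i _; apply: memvZ.
move=> w wU; rewrite linear_sumlz [X in b y X](expand w wU) linear_sumr.
by apply: eq_bigr => i _; rewrite linearZl_LR linearZr_LR /= mulrC (bC (Y i)).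
Qed.

Section Riesz.
Variable g : V -> R.
Hypothesis g_lin : linear_for *%R g.
#[local] HB.instance Definition _ := GRing.isLinear.Build R V R *%R g g_lin.

Lemma frame_riesz : exists2 x, x \in U & {in U, forall w, b x w = g w}.
Proof.
case: fr => XU YU expand; exists (\sum_i g (X i) *: Y i).
  by apply: memv_suml => i _; apply: memvZ.
move=> w wU; rewrite linear_sumlz {2}(expand w wU) linear_sum.
by apply: eq_bigr => i _; rewrite linearZl_LR linearZ_LR /= mulrC (bC (Y i)).
Qed.

End Riesz.

Section FrameSym.
Variable B : V -> V -> R.
Hypothesis B_bil : bilinear_for *%R *%R B.
#[local] HB.instance Definition _ := bilinear_isBilinear.Build R V V R *%R *%R B B_bil.

Lemma frame_sumC : \sum_i B (X i) (Y i) = \sum_i B (Y i) (X i).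
Proof.
case: fr => _ YU expand.
transitivity (\sum_i \sum_j b (Y i) (Y j) * B (X i) (X j)).
  apply: eq_bigr => i _; rewrite {1}(expand _ (YU i)) linear_sumr.
  by apply: eq_bigr => j _; rewrite linearZr_LR.
rewrite exchange_big /=; apply: eq_bigr => i _.
rewrite {2}(expand _ (YU i)) linear_sumlz; apply: eq_bigr => j _.
by rewrite linearZl_LR bC.
Qed.

Lemma frame_sum_alt : (forall x y, B x y = - B y x) -> \sum_i B (X i) (Y i) = 0.
Proof.
move=> B_alt; have : \sum_i B (X i) (Y i) = - \sum_i B (X i) (Y i).
  by rewrite {1}frame_sumC -sumrN; apply: eq_bigr => i _; rewrite B_alt.
move/eqP; rewrite -addr_eq0 -mulr2n -mulr_natr mulf_eq0 pnatr_eq0 orbF.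
by move/eqP.
Qed.

End FrameSym.
End Frame.

Lemma frame_full_ext (I : finType) (X Y : I -> V) (fr : dual_frame fullv X Y) x y :
  (forall w, b x w = b y w) -> x = y.
Proof. by move=> bxy; apply: (frame_ext fr); rewrite ?memvf. Qed.

Section Trace.
Variable f : V -> V.
Hypothesis f_lin : linear f.
#[local] HB.instance Definition _ := GRing.isLinear.Build R V V *:%R f f_lin.

Lemma vtrace_frame (I : finType) (X Y : I -> V) :
  dual_frame fullv X Y -> vtrace f = \sum_i b (f (X i)) (Y i).
Proof.
case=> _ _ expand; pose e := vbasis (@fullv R V).
transitivity (\sum_(k < \dim {:V}) \sum_i
   b (tnth e k) (Y i) * coord e k (f (X i))).
  apply: eq_bigr => k _; rewrite {1}(expand _ (memvf (tnth e k))).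
  by rewrite !linear_sum; apply: eq_bigr => i _; rewrite !linearZ.
rewrite exchange_big /=; apply: eq_bigr => i _.
rewrite {2}(coord_vbasis (memvf (f (X i)))) linear_sumlz.
by apply: eq_bigr => k _; rewrite linearZl_LR mulrC (tnth_nth 0).
Qed.

End Trace.

End DualFrame.

Section LeviCivita.
Variables (R : realType) (V : vectType R) (br : V -> V -> V) (b : V -> V -> R).
Hypothesis br_bil : bilinear_for *:%R *:%R br.
Hypothesis b_sym : sym_bilinear b.
Variables (I : finType) (X Y : I -> V).
Hypothesis fr : dual_frame b fullv X Y.

#[local] HB.instance Definition _ :=
  bilinear_isBilinear.Build R V V V *:%R *:%R br br_bil.
#[local] HB.instance Definition _ :=
  bilinear_isBilinear.Build R V V R *%R *%R b (sym_bilinear_for b_sym).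

Local Notation L := (lc_prod br b).
Local Notation form_ext := (frame_full_ext fr).

Lemma choose_dualE (g : V -> R) : linear_for *%R g ->
  forall w, b (choose_vec (fun x => forall w, b x w = g w)) w = g w.
Proof.
move=> g_lin; have [x _ bx] := frame_riesz b_sym fr g_lin.
apply: (choose_vecP (P := fun x => forall w, b x w = g w)).
by exists x => w; rewrite bx ?memvf.
Qed.

Lemma lc_prodE u v w :
  b (L u v) w = 2^-1 * (b (br u v) w + b (br w u) v + b (br w v) u).
Proof.
pose g w := 2^-1 * (b (br u v) w + b (br w u) v + b (br w v) u).
have g_lin : linear_for ( *%R : R -> R -> R) g.
  by move=> a x y; rewrite /g !(linearPl, linearPr) /=; ring.
have [x _ bx] := frame_riesz b_sym fr g_lin.
have two_L w' : 2 * b (L u v) w' = b (br u v) w' + b (br w' u) v + b (br w' v) u.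
  move: w'; apply: (choose_vecP (P := fun x => forall w,
    2 * b x w = b (br u v) w + b (br w u) v + b (br w v) u)).
  exists x => w'.
  by rewrite bx ?memvf // /g mulrA divff ?mul1r // pnatr_eq0.
by rewrite -(two_L w) mulrA mulVf ?mul1r // pnatr_eq0.
Qed.

Lemma lc_prod_bilinear : bilinear_for *:%R *:%R L.
Proof.
by split=> z a x y /=; apply: form_ext => w;
  rewrite [RHS]linearPl /= !lc_prodE !(linearPl, linearPr) /=; ring.
Qed.

#[local] HB.instance Definition _ :=
  bilinear_isBilinear.Build R V V V *:%R *:%R L lc_prod_bilinear.

Lemma curv_linear_mid u v : linear (fun w => curv br b u w v).
Proof.
move=> a x y; rewrite /curv !(linearPl, linearPr) /=.
by apply: form_ext => w; rewrite !(linearBl, linearDl, linearZl_LR) /=; ring.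
Qed.

Lemma curv_linear_last u w : linear (curv br b u w).
Proof.
move=> a x y; rewrite /curv !(linearPl, linearPr) /=.
by apply: form_ext => t; rewrite !(linearBl, linearDl, linearZl_LR) /=; ring.
Qed.

Lemma ric_frame u v : ric br b u v = \sum_i b (curv br b u (X i) v) (Y i).
Proof. exact: (vtrace_frame b_sym (curv_linear_mid u v) fr). Qed.

Lemma RicE u v : b (Ric br b u) v = ric br b u v.
Proof.
apply: choose_dualE => a x y; rewrite !ric_frame mulr_sumr -big_split /=.
by apply: eq_bigr => i _; rewrite curv_linear_last linearPl.
Qed.

Lemma adjE (f : V -> V) v w : linear f -> b (adj b f v) w = b v (f w).
Proof. by move=> f_lin; apply: choose_dualE => a x y; rewrite f_lin linearPr. Qed.

End LeviCivita.

Section CentralExtension.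
Variables (R : realType) (H : vectType R) (br : H -> H -> H) (b : H -> H -> R).
Variables (Z G : {vspace H}).
Hypothesis br_lie : lie_algebra br.
Hypothesis b_sym : sym_bilinear b.
Hypothesis Z_central : forall z x, z \in Z -> br z x = 0.
Hypothesis Z_pos : forall z, z \in Z -> z != 0 -> 0 < b z z.
Hypothesis G_perp : forall x, x \in G <-> (forall z, z \in Z -> b x z = 0).
Variables (I : finType) (X Y : I -> H).
Hypothesis fr : dual_frame b fullv X Y.

#[local] HB.instance Definition _ :=
  bilinear_isBilinear.Build R H H H *:%R *:%R br (lie_bilinear br_lie).
#[local] HB.instance Definition _ :=
  bilinear_isBilinear.Build R H H R *%R *%R b (sym_bilinear_for b_sym).

Let bC : forall x y, b x y = b y x := b_sym.2.

Lemma Z_central_r x z : z \in Z -> br x z = 0.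
Proof. by move=> zZ; rewrite (lie_anticomm br_lie) Z_central ?oppr0. Qed.

Lemma bGZ x z : x \in G -> z \in Z -> b x z = 0.
Proof. by move/G_perp; apply. Qed.

Lemma bZG z x : z \in Z -> x \in G -> b z x = 0.
Proof. by move=> zZ xG; rewrite bC bGZ. Qed.

Lemma capGZ : (G :&: Z = 0)%VS.
Proof.
apply/eqP; rewrite -subv0; apply/subvP => x /memv_capP [xG xZ].
rewrite memv0; apply/negPn/negP => x_neq0.
by have := Z_pos xZ x_neq0; rewrite bGZ ?ltxx.
Qed.

Definition Z_pairing (y : H) : 'rV[R]_(\dim Z) := \row_i b y (vbasis Z)`_i.

Lemma Z_pairing_linear : linear Z_pairing.
Proof. by move=> a x y; apply/rowP => i; rewrite !mxE linearPl. Qed.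

#[local] HB.instance Definition _ :=
  GRing.isLinear.Build R H 'rV[R]_(\dim Z) *:%R Z_pairing Z_pairing_linear.

Lemma addGZ : (G + Z = fullv)%VS.
Proof.
have kerG : (lker (linfun Z_pairing) <= G)%VS.
  apply/subvP => x; rewrite memv_ker lfunE => /eqP x0.
  apply/G_perp => z zZ; rewrite (coord_vbasis zZ) linear_sumr big1 // => i _.
  have := congr1 (fun m : 'rV_(\dim Z) => m 0 i) x0.
  by rewrite !mxE linearZr_LR /= => ->; rewrite mulr0.
have dim_img : (\dim (linfun Z_pairing @: fullv) <= \dim Z)%N.
  by have := dimvS (subvf (linfun Z_pairing @: fullv)); rewrite dimvf /dim /= mul1n.
apply/eqP; rewrite eqEdim subvf dimv_disjoint_sum ?capGZ //=.
rewrite -(limg_ker_dim (linfun Z_pairing) fullv) capfv.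
exact: leq_add (dimvS kerG) dim_img.
Qed.

Local Notation pG := (daddv_pi G Z).
Local Notation pZ := (daddv_pi Z G).

Lemma pG_G y : pG y \in G. Proof. exact: memv_pi. Qed.
Lemma pZ_Z y : pZ y \in Z. Proof. exact: memv_pi. Qed.

Lemma pG_add_pZ y : pG y + pZ y = y.
Proof. by apply: daddv_pi_add capGZ _; rewrite addGZ memvf. Qed.

Lemma pG_id x : x \in G -> pG x = x. Proof. exact: daddv_pi_id capGZ. Qed.
Lemma pZ_id z : z \in Z -> pZ z = z.
Proof. by apply: daddv_pi_id; rewrite capvC capGZ. Qed.

Lemma b_pG y w : w \in G -> b (pG y) w = b y w.
Proof.
by move=> wG; rewrite -[in RHS](pG_add_pZ y) linearDl /= (bZG (pZ_Z y) wG) addr0.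
Qed.

Lemma b_pZ y w : w \in Z -> b (pZ y) w = b y w.
Proof.
by move=> wZ; rewrite -[in RHS](pG_add_pZ y) linearDl /= (bGZ (pG_G y) wZ) add0r.
Qed.

Lemma ext_GZ x y : {in G, forall w, b x w = b y w} ->
  {in Z, forall w, b x w = b y w} -> x = y.
Proof.
move=> bxyG bxyZ; apply: (frame_full_ext fr) => w.
by rewrite -(pG_add_pZ w) !linearDr /= bxyG ?pG_G // bxyZ ?pZ_Z.
Qed.

Lemma ext_G x y : x \in G -> y \in G -> {in G, forall w, b x w = b y w} -> x = y.
Proof. by move=> xG yG bxy; apply: ext_GZ => // w wZ; rewrite !bGZ. Qed.

Definition gX i := pG (X i).
Definition gY i := pG (Y i).
Definition zX i := pZ (X i).
Definition zY i := pZ (Y i).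

Lemma frameG : dual_frame b G gX gY.
Proof.
case: fr => _ _ expand; split=> [i|i|y yG]; rewrite ?pG_G //.
rewrite -{1}(pG_id yG) {1}(expand y (memvf y)) linear_sum.
by apply: eq_bigr => i _; rewrite linearZ /= (bC y (pG _)) b_pG // bC.
Qed.

Lemma frameZ : dual_frame b Z zX zY.
Proof.
case: fr => _ _ expand; split=> [i|i|y yZ]; rewrite ?pZ_Z //.
rewrite -{1}(pZ_id yZ) {1}(expand y (memvf y)) linear_sum.
by apply: eq_bigr => i _; rewrite linearZ /= (bC y (pZ _)) b_pZ // bC.
Qed.

Definition gzX (s : I + I) := match s with inl i => gX i | inr i => zX i end.
Definition gzY (s : I + I) := match s with inl i => gY i | inr i => zY i end.

Lemma frameGZ : dual_frame b fullv gzX gzY.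
Proof.
split=> [s|s|y _]; rewrite ?memvf // big_sumType /=.
case: frameG => _ gYG expandG; case: frameZ => _ zYZ expandZ.
rewrite -[LHS]pG_add_pZ {1}(expandG _ (pG_G y)) {1}(expandZ _ (pZ_Z y)).
by congr (_ + _); apply: eq_bigr => i _; rewrite ?b_pG ?b_pZ.
Qed.

Local Notation g := (subvs_of G).
Local Notation bg := (gform G b).
Local Notation brg := (gbr Z G br).

Lemma gform_sym : sym_bilinear bg.
Proof. by split=> [a x y z|x y]; rewrite /gform ?linearP /= ?linearPl // bC. Qed.

Lemma gbr_bilinear : bilinear_for *:%R *:%R brg.
Proof. by split=> z a x y; rewrite /gbr /= !(linearPl, linearPr) !linearP. Qed.

Lemma val_gbr u v : vsval (brg u v) = pG (br (vsval u) (vsval v)).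
Proof. by rewrite /gbr vsprojK ?pG_G. Qed.

Definition sX i : g := vsproj G (gX i).
Definition sY i : g := vsproj G (gY i).

Lemma frame_g : dual_frame bg fullv sX sY.
Proof.
split=> [i|i|y _]; rewrite ?memvf //; apply: val_inj; rewrite linear_sum /=.
case: frameG => gXG gYG expand; rewrite {1}(expand _ (subvsP y)).
by apply: eq_bigr => i _; rewrite /gform /sX /sY !vsprojK.
Qed.

Lemma br_pG_l x w : br (pG x) w = br x w.
Proof.
by rewrite -[in RHS](pG_add_pZ x) linearDl /= (Z_central _ (pZ_Z x)) addr0.
Qed.

Lemma br_pG_r x w : br w (pG x) = br w x.
Proof.
by rewrite -[in RHS](pG_add_pZ x) linearDr /= (Z_central_r _ (pZ_Z x)) addr0.
Qed.

Definition Lg a c := vsval (lc_prod brg bg (vsproj G a) (vsproj G c)).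

Lemma Lg_G a c : Lg a c \in G. Proof. exact: subvsP. Qed.

Lemma LgE a c w : a \in G -> c \in G -> w \in G ->
  b (Lg a c) w = 2^-1 * (b (br a c) w + b (br w a) c + b (br w c) a).
Proof.
move=> aG cG wG.
have := lc_prodE gbr_bilinear gform_sym frame_g (vsproj G a) (vsproj G c) (vsproj G w).
by rewrite /gform !val_gbr !vsprojK // => ->; rewrite !b_pG.
Qed.

Definition jmap z a := \sum_i b (br a (gY i)) z *: gX i.

Lemma jmap_G z a : jmap z a \in G.
Proof. by apply: memv_suml => i _; rewrite memvZ ?pG_G. Qed.

Lemma jmapE z a w : w \in G -> b (jmap z a) w = b (br a w) z.
Proof.
move=> wG; rewrite [in RHS](frame_expand_dual b_sym frameG wG) linear_sumr.
rewrite linear_sumlz /= linear_sumlz; apply: eq_bigr => i _.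
by rewrite linearZr_LR !linearZl_LR /= mulrC bC.
Qed.

Lemma jmap_bilinear : bilinear_for *:%R *:%R jmap.
Proof.
split=> c a x y /=; apply: ext_G; rewrite ?memvD ?memvZ ?jmap_G // => w wG;
  by rewrite linearPl /= !jmapE // !(linearPl, linearPr).
Qed.

#[local] HB.instance Definition _ :=
  bilinear_isBilinear.Build R H H H *:%R *:%R jmap jmap_bilinear.
#[local] HB.instance Definition _ := bilinear_isBilinear.Build R H H H *:%R *:%R
  (lc_prod br b) (lc_prod_bilinear (lie_bilinear br_lie) b_sym fr).

Local Notation L := (lc_prod br b).
Local Notation LE := (lc_prodE (lie_bilinear br_lie) b_sym fr).

Lemma lc_prodGG a c : a \in G -> c \in G -> L a c = Lg a c + 2^-1 *: pZ (br a c).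
Proof.
move=> aG cG; apply: ext_GZ => [w wG|w wZ]; rewrite linearDl linearZl_LR /= LE.
  by rewrite LgE // (bZG (pZ_Z _) wG) mulr0 addr0.
by rewrite (bGZ (Lg_G _ _) wZ) b_pZ // !(Z_central _ wZ) !linear0l; ring.
Qed.

Lemma lc_prodGZ a z : a \in G -> z \in Z -> L a z = - 2^-1 *: jmap z a.
Proof.
move=> aG zZ; apply: ext_GZ => [w wG|w wZ]; rewrite LE linearZl_LR /=.
  rewrite jmapE // (Z_central_r a zZ) (Z_central_r w zZ) !linear0l.
  by rewrite (lie_anticomm br_lie w a) linearNl /=; ring.
by rewrite (bGZ (jmap_G _ _) wZ) (Z_central_r a zZ) !(Z_central _ wZ) !linear0l; ring.
Qed.

Lemma lc_prodZG a z : a \in G -> z \in Z -> L z a = - 2^-1 *: jmap z a.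
Proof.
move=> aG zZ; apply: ext_GZ => [w wG|w wZ]; rewrite LE linearZl_LR /=.
  rewrite jmapE // (Z_central _ zZ) (Z_central_r w zZ) !linear0l.
  by rewrite (lie_anticomm br_lie w a) linearNl /=; ring.
by rewrite (bGZ (jmap_G _ _) wZ) (Z_central _ zZ) !(Z_central _ wZ) !linear0l; ring.
Qed.

Lemma lc_prodZZ z z' : z \in Z -> z' \in Z -> L z z' = 0.
Proof.
move=> zZ z'Z; apply: (frame_full_ext fr) => w; rewrite LE linear0l.
by rewrite (Z_central _ zZ) (Z_central_r w zZ) (Z_central_r w z'Z) !linear0l; ring.
Qed.

Lemma val_curv_g u x v : u \in G -> x \in G -> v \in G ->
  vsval (curv brg bg (vsproj G u) (vsproj G x) (vsproj G v)) =
  Lg (pG (br u x)) v - (Lg u (Lg x v) - Lg x (Lg u v)).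
Proof.
move=> uG xG vG; rewrite /curv !raddfB /=.
have -> : brg (vsproj G u) (vsproj G x) = vsproj G (pG (br u x)).
  by rewrite /gbr !vsprojK.
by rewrite /Lg !vsvalK.
Qed.

Let quarter : 4^-1 = 2^-1 * 2^-1 :> R.
Proof. by rewrite -invfM -natrM. Qed.

Lemma curv_GG u x v y : u \in G -> x \in G -> v \in G -> y \in G ->
  b (curv br b u x v) y =
  b (vsval (curv brg bg (vsproj G u) (vsproj G x) (vsproj G v))) y
  - 2^-1 * b (br v y) (pZ (br u x))
  + 4^-1 * b (br u y) (pZ (br x v))
  - 4^-1 * b (br x y) (pZ (br u v)).
Proof.
move=> uG xG vG yG; rewrite val_curv_g // /curv.
rewrite -{1}(pG_add_pZ (br u x)) [L (_ + _) _]linearDl /=.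
rewrite lc_prodGG ?pG_G // lc_prodZG ?pZ_Z //.
rewrite (lc_prodGG xG vG) (lc_prodGG uG vG) !linearDr !linearZr_LR /=.
rewrite (lc_prodGG uG (Lg_G _ _)) (lc_prodGZ uG (pZ_Z _)).
rewrite (lc_prodGG xG (Lg_G _ _)) (lc_prodGZ xG (pZ_Z _)).
rewrite !(linearBl, linearDl, linearZl_LR) /= !jmapE // !(bZG (pZ_Z _) yG).
by rewrite quarter; ring.
Qed.

Lemma curv_ZZ u v z y : u \in G -> v \in G -> z \in Z -> y \in Z ->
  b (curv br b u z v) y = 4^-1 * b (br u (jmap z v)) y.
Proof.
move=> uG vG zZ yZ; rewrite /curv (Z_central_r u zZ) linear0l.
rewrite (lc_prodZG vG zZ) linearZr_LR /= (lc_prodGG uG (jmap_G _ _)).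
rewrite (lc_prodGG uG vG) linearDr linearZr_LR /=.
rewrite (lc_prodZG (Lg_G _ _) zZ) (lc_prodZZ zZ (pZ_Z _)).
rewrite !(linearBl, linearDl, linearZl_LR, linear0l) /= !b_pZ //.
by rewrite !(bGZ (Lg_G _ _) yZ) !(bGZ (jmap_G _ _) yZ) quarter; ring.
Qed.

Definition omega_gram u v := \sum_i b (pZ (br u (gX i))) (pZ (br v (gY i))).

Lemma omega_gram_swap u v :
  \sum_i b (pZ (br u (gY i))) (pZ (br v (gX i))) = omega_gram u v.
Proof.
symmetry; apply: (frame_sumC b_sym frameG
  (B := fun x y => b (pZ (br u x)) (pZ (br v y)))).
by split=> z a x y /=; rewrite !(linearPr, linearP, linearPl).
Qed.

Lemma omega_gramC u v : omega_gram u v = omega_gram v u.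
Proof. by rewrite -omega_gram_swap; apply: eq_bigr => i _; rewrite bC. Qed.

Lemma ric_Gpart u v : u \in G -> v \in G ->
  \sum_i b (curv br b u (gX i) v) (gY i) =
  ric brg bg (vsproj G u) (vsproj G v) - (2^-1 + 4^-1) * omega_gram u v.
Proof.
move=> uG vG; case: frameG => gXG gYG _.
have ric_g : ric brg bg (vsproj G u) (vsproj G v) = \sum_i
    b (vsval (curv brg bg (vsproj G u) (vsproj G (gX i)) (vsproj G v))) (gY i).
  rewrite (ric_frame gbr_bilinear gform_sym frame_g).
  by apply: eq_bigr => i _; rewrite /gform /sY vsprojK.
have sum_omega : \sum_i b (br v (gY i)) (pZ (br u (gX i))) = omega_gram u v.
  by apply: eq_bigr => i _; rewrite -b_pZ ?pZ_Z // bC.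
have sum_omega_swap :
    \sum_i b (br u (gY i)) (pZ (br (gX i) v)) = - omega_gram u v.
  rewrite -omega_gram_swap -sumrN; apply: eq_bigr => i _.
  by rewrite -b_pZ ?pZ_Z // (lie_anticomm br_lie _ v) linearN linearNr.
have sum_bracket0 : \sum_i b (br (gX i) (gY i)) (pZ (br u v)) = 0.
  apply: (frame_sum_alt b_sym frameG (B := fun x y => b (br x y) (pZ (br u v)))).
    by split=> z a x y /=; rewrite !(linearPl, linearPr).
  by move=> x y; rewrite (lie_anticomm br_lie x) linearNl.
rewrite (eq_bigr _ (fun i _ => curv_GG uG (gXG i) vG (gYG i))).
rewrite sumrB big_split sumrB /= -!mulr_sumr.
by rewrite sum_omega sum_omega_swap sum_bracket0 -ric_g; ring.
Qed.

Lemma jmap_frame_sum u v :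
  \sum_i b (br u (jmap (zX i) v)) (zY i) = omega_gram u v.
Proof.
transitivity (\sum_i \sum_j b (br v (gY j)) (zX i) * b (br u (gX j)) (zY i)).
  apply: eq_bigr => i _; rewrite /jmap linear_sumr linear_sumlz.
  by apply: eq_bigr => j _; rewrite linearZr_LR linearZl_LR.
rewrite exchange_big /=; apply: eq_bigr => j _.
rewrite [pZ (br v _)](frame_expand_dual b_sym frameZ (pZ_Z _)) linear_sumr.
case: frameZ => zXZ zYZ _.
by apply: eq_bigr => i _; rewrite linearZr_LR /= !b_pZ.
Qed.

Lemma ric_Zpart u v : u \in G -> v \in G ->
  \sum_i b (curv br b u (zX i) v) (zY i) = 4^-1 * omega_gram u v.
Proof.
move=> uG vG; case: frameZ => zXZ zYZ _.
rewrite -jmap_frame_sum mulr_sumr; apply: eq_bigr => i _.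
exact: curv_ZZ.
Qed.

Lemma ric_restrict u v : u \in G -> v \in G ->
  ric br b u v = ric brg bg (vsproj G u) (vsproj G v) - 2^-1 * omega_gram u v.
Proof.
move=> uG vG; rewrite (ric_frame (lie_bilinear br_lie) b_sym frameGZ).
by rewrite big_sumType /= ric_Gpart // ric_Zpart //; ring.
Qed.

Definition jsq u := \sum_i jmap (zX i) (jmap (zY i) u).

Lemma jsq_G u : jsq u \in G.
Proof. by apply: memv_suml => i _; apply: jmap_G. Qed.

Lemma jsq_linear : linear jsq.
Proof.
move=> a x y; rewrite /jsq scaler_sumr -big_split /=; apply: eq_bigr => i _.
by rewrite !linearPr.
Qed.

Lemma jsqE u w : u \in G -> w \in G -> b (jsq u) w = - omega_gram u w.
Proof.
move=> uG wG; case: frameZ => zXZ zYZ _.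
rewrite /jsq linear_sumlz.
have -> : \sum_i b (jmap (zX i) (jmap (zY i) u)) w =
    - \sum_i b (br w (jmap (zY i) u)) (zX i).
  rewrite -sumrN; apply: eq_bigr => i _.
  by rewrite jmapE // (lie_anticomm br_lie) linearNl.
rewrite (frame_sumC b_sym frameZ (B := fun x y => b (br w (jmap y u)) x)).
  by rewrite jmap_frame_sum omega_gramC.
by split=> z a x y /=; rewrite !(linearPl, linearPr).
Qed.

Hypothesis omega_adj_skew : forall u v w : g,
  omega Z G br (vsval (adj bg (brg u) v)) (vsval w)
  + omega Z G br (vsval v) (vsval (adj bg (brg u) w)) = 0.

Definition adjG (u : g) y := vsval (adj bg (brg u) (vsproj G y)).

Lemma adjG_G u y : adjG u y \in G. Proof. exact: subvsP. Qed.

Lemma adjGE u y w : y \in G -> w \in G ->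
  b (adjG u y) w = b y (pG (br (vsval u) w)).
Proof.
move=> yG wG.
have := adjE gform_sym frame_g (vsproj G y) (vsproj G w) (gbr_bilinear.2 u).
by rewrite /gform val_gbr !vsprojK.
Qed.

Lemma jmap_bracket u v z : u \in G -> v \in G -> z \in Z ->
  jmap z (pG (br u v)) + adjG (vsproj G u) (jmap z v) =
  adjG (vsproj G v) (jmap z u).
Proof.
move=> uG vG zZ; apply: ext_G; rewrite ?memvD ?adjG_G ?jmap_G // => w wG.
rewrite linearDl /= !adjGE ?jmap_G // !vsprojK // jmapE //.
rewrite (jmapE z v (pG_G _)) (jmapE z u (pG_G _)) br_pG_l !br_pG_r.
by rewrite -linearDl /= -lie_ad_derivation.
Qed.

Lemma jmap_adjG u y z : u \in G -> y \in G -> z \in Z ->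
  jmap z (adjG (vsproj G u) y) = - pG (br u (jmap z y)).
Proof.
move=> uG yG zZ; apply: ext_G; rewrite ?memvN ?pG_G ?jmap_G // => w wG.
have := omega_adj_skew (vsproj G u) (vsproj G y) (vsproj G w).
rewrite /omega !vsprojK // => /eqP; rewrite addr_eq0 => /eqP.
rewrite -/(adjG (vsproj G u) y) -/(adjG (vsproj G u) w) => skew.
rewrite jmapE // -b_pZ // skew linearNl /= (b_pZ _ zZ) -(jmapE z y (adjG_G _ _)) bC.
by rewrite adjGE ?jmap_G // vsprojK // bC linearNl.
Qed.

Lemma jsq_derivation u v : u \in G -> v \in G ->
  jsq (pG (br u v)) = pG (br (jsq u) v) + pG (br u (jsq v)).
Proof.
move=> uG vG; case: frameZ => zXZ zYZ _.
have jsq_r : pG (br u (jsq v)) =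
    - \sum_i jmap (zX i) (adjG (vsproj G u) (jmap (zY i) v)).
  rewrite /jsq linear_sumr linear_sum -sumrN; apply: eq_bigr => i _.
  by rewrite jmap_adjG ?jmap_G // opprK.
have jsq_l : pG (br (jsq u) v) =
    \sum_i jmap (zX i) (adjG (vsproj G v) (jmap (zY i) u)).
  rewrite (lie_anticomm br_lie) linearN /jsq linear_sumr linear_sum -sumrN.
  by apply: eq_bigr => i _; rewrite jmap_adjG ?jmap_G // opprK.
rewrite jsq_r jsq_l -sumrB; apply: eq_bigr => i _.
by rewrite -linearBr -(jmap_bracket uG vG (zYZ i)) addrK.
Qed.

Definition soliton_der (x : g) : g := vsproj G (- 2^-1 *: jsq (vsval x)).

Lemma soliton_der_linear : linear soliton_der.
Proof.
move=> a x y; apply: val_inj; rewrite /soliton_der linearP /=.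
rewrite !vsprojK ?memvZ ?jsq_G // jsq_linear.
by rewrite scalerDr !scalerA mulrC.
Qed.

#[local] HB.instance Definition _ :=
  GRing.isLinear.Build R g g *:%R soliton_der soliton_der_linear.

Lemma soliton_der_derivation : derivation brg (linfun soliton_der).
Proof.
move=> x y; rewrite !lfunE /=; apply: val_inj.
rewrite /soliton_der linearD /= !val_gbr !vsprojK ?memvZ ?jsq_G //.
by rewrite jsq_derivation ?subvsP // linearZl_LR linearZr_LR !linearZ -scalerDr.
Qed.

Lemma Ric_g_soliton lam : (forall u, Ric br b u = lam *: u) ->
  forall x : g, Ric brg bg x = lam *: x + soliton_der x.
Proof.
move=> einst x; apply: (frame_full_ext frame_g) => y.
have xG := subvsP x; have yG := subvsP y.
rewrite (RicE gbr_bilinear gform_sym frame_g).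
have -> : ric brg bg x y =
    ric br b (vsval x) (vsval y) + 2^-1 * omega_gram (vsval x) (vsval y).
  by rewrite ric_restrict // !vsvalK; ring.
rewrite -(RicE (lie_bilinear br_lie) b_sym fr) einst.
rewrite /gform linearP /= /soliton_der.
by rewrite vsprojK ?memvZ ?jsq_G // linearDl !linearZl_LR /= jsqE //; ring.
Qed.

Lemma einstein_ricci_soliton : einstein br b -> ricci_soliton brg bg.
Proof.
case=> lam einst; exists lam, (linfun soliton_der); split.
  exact: soliton_der_derivation.
by move=> x; rewrite lfunE; apply: Ric_g_soliton.
Qed.

End CentralExtension.

Section Lorentzian.
Variables (R : realType) (H : vectType R) (b : H -> H -> R).
Hypothesis b_lor : lorentzian b.

#[local] HB.instance Definition _ :=
  bilinear_isBilinear.Build R H H R *%R *%R b (sym_bilinear_for (proj1 b_lor)).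

Lemma lorentzian_dual_frame :
  exists (I : finType) (X Y : I -> H), dual_frame b fullv X Y.
Proof.
case: b_lor => _ [X [X_basis [i0 X_orth]]].
pose sgn i : R := if i == i0 then -1 else 1.
exists 'I_(\dim {:H}), (tnth X), (fun i => sgn i *: tnth X i).
split=> [i|i|y _]; rewrite ?memvf // {1}(coord_basis X_basis (memvf y)).
apply: eq_bigr => i _; rewrite -tnth_nth; congr (_ *: _).
rewrite linearZr_LR {2}(coord_basis X_basis (memvf y)) linear_sumlz /=.
rewrite (bigD1 i) //= big1 => [|j ji]; rewrite -tnth_nth linearZl_LR /= X_orth.
  by rewrite eqxx /sgn; case: (i == i0); rewrite addr0; ring.
by rewrite (negbTE ji) mulr0.
Qed.

End Lorentzian.

Theorem proposition3p3 (R : realType) (H : vectType R)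
  (br : H -> H -> H) (b : H -> H -> R) (Z G : {vspace H}) :
  lie_algebra br -> nilpotent br -> lorentzian b ->
  (forall z, z \in Z <-> central br z) ->
  (forall z, z \in Z -> z != 0 -> 0 < b z z) ->
  (forall x, x \in G <-> (forall z, z \in Z -> b x z = 0)) ->
  einstein br b ->
  (forall u v w : subvs_of G,
     omega Z G br (vsval (adj (gform G b) (gbr Z G br u) v)) (vsval w)
     + omega Z G br (vsval v) (vsval (adj (gform G b) (gbr Z G br u) w)) = 0) ->
  ricci_soliton (gbr Z G br) (gform G b).
Proof.
move=> br_lie _ b_lor Z_center Z_pos G_perp einst omega_adj_skew.
have [I [X [Y fr]]] := lorentzian_dual_frame b_lor.
have Z_central z x : z \in Z -> br z x = 0 by move/Z_center; apply.
exact: (einstein_ricci_soliton br_lie (proj1 b_lor) Z_central Z_pos G_perp fr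
  omega_adj_skew einst).
Qed.
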